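(* Let $f:\Omega\to[0,M]$ be weakly canalizing with respect to coordinate $j$ and $(a,b)\in\Omega_j\times\mathbb{R}$, where $k_j\ge2$. Let $f'=f\restriction_{x_j\ne a}$, defined on $\Omega'=\Omega_1\times\cdots\times(\Omega_j\setminus\{a\})\times\cdots\times\Omega_n$. Then $$\operatorname{AS}[f]\le \frac{M^2}{4}+\frac{k_j-1}{k_j}\,\operatorname{AS}[f'],$$ where $\operatorname{AS}[f']$ is computed on the product $\Omega'$ with its own uniform product measure.
   Context: Let $\Omega_1,\ldots,\Omega_n$ be finite sets with $|\Omega_i|=k_i\ge1$, and $\Omega=\prod_i\Omega_i$ with the uniform product probability measure. Weakly canalizing: $f$ is weakly canalizing with respect to $j$ and $(a,b)$ if $f(x)=b$ for all $x\in\Omega$ with $x_j=a$. Influence and average sensitivity: for a product $\Pi=\prod_i P_i$ of finite nonempty sets with the uniform product measure and $g:\Pi\to\mathbb{R}$, let $\operatorname{Var}_i[g](x)$ be the variance of $y_i\mapsto g(x_1,\ldots,x_{i-1},y_i,x_{i+1},\ldots,x_n)$ for $y_i$ uniform on $P_i$. Then: - $\operatorname{Inf}_i[g]=\mathbf{E}_x[\operatorname{Var}_i[g](x)]$; - $\operatorname{AS}[g]=\sum_{i=1}^n\operatorname{Inf}_i[g]$. *)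

From mathcomp Require Import all_boot all_order all_algebra.
Set Implicit Arguments. Unset Strict Implicit. Unset Printing Implicit Defensive.
Import Order.TTheory GRing.Theory Num.Theory.
Local Open Scope ring_scope.

(* A finite product Pi = prod_{i < n} P i of finite sets P i, all drawn from a
   common finite ambient type T; points are x : {ffun 'I_n -> T} with x i \in P i. *)
Section Prod.
Variables (T : finType) (n : nat) (R : realFieldType).

Definition inprod (P : 'I_n -> {set T}) (x : {ffun 'I_n -> T}) : bool :=
  [forall i, x i \in P i].

Definition prodset (P : 'I_n -> {set T}) : {set {ffun 'I_n -> T}} :=
  [set x | inprod P x].

Definition Eprod (P : 'I_n -> {set T}) (g : {ffun 'I_n -> T} -> R) : R :=
  (\sum_(x in prodset P) g x) / #|prodset P|%:R.

Definition upd (x : {ffun 'I_n -> T}) (i : 'I_n) (y : T) : {ffun 'I_n -> T} :=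
  [ffun k => if k == i then y else x k].

Definition mean_i (P : 'I_n -> {set T}) (g : {ffun 'I_n -> T} -> R)
    (i : 'I_n) (x : {ffun 'I_n -> T}) : R :=
  (\sum_(y in P i) g (upd x i y)) / #|P i|%:R.

Definition Var_i (P : 'I_n -> {set T}) (g : {ffun 'I_n -> T} -> R)
    (i : 'I_n) (x : {ffun 'I_n -> T}) : R :=
  (\sum_(y in P i) (g (upd x i y) - mean_i P g i x) ^+ 2) / #|P i|%:R.

Definition Inf (P : 'I_n -> {set T}) (g : {ffun 'I_n -> T} -> R) (i : 'I_n) : R :=
  Eprod P (Var_i P g i).

Definition AS (P : 'I_n -> {set T}) (g : {ffun 'I_n -> T} -> R) : R :=
  \sum_(i < n) Inf P g i.

Definition weakly_canalizing (P : 'I_n -> {set T}) (f : {ffun 'I_n -> T} -> R)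
    (j : 'I_n) (a : T) (b : R) : Prop :=
  forall x, inprod P x -> x j = a -> f x = b.

Definition remove_at (P : 'I_n -> {set T}) (j : 'I_n) (a : T) : 'I_n -> {set T} :=
  fun i => if i == j then P j :\ a else P i.

End Prod.

From mathcomp Require Import all_boot all_order all_algebra.
From mathcomp Require Import ring lra.
Set Implicit Arguments. Unset Strict Implicit. Unset Printing Implicit Defensive.
Import Order.TTheory GRing.Theory Num.Theory.
Local Open Scope ring_scope.

(* The j-th influence is an average of variances of a [0, M]-valued function,
   hence at most M^2/4 (Popoviciu).  For i <> j, f is constant on every i-fibre
   through the slice x_j = a, so those fibres contribute nothing: the sum
   defining Inf_i[f] over Omega equals the one over Omega', and only the
   normalisations differ, by |Omega'| / |Omega| = (k_j - 1) / k_j.  Finally the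
   j-th influence of f' is nonnegative. *)

Lemma sum_sqr_dev_mean_le (R : realFieldType) (I : finType) (A : {set I})
    (h : I -> R) (c : R) :
  (0 < #|A|)%N ->
  \sum_(y in A) (h y - (\sum_(z in A) h z) / #|A|%:R) ^+ 2
    <= \sum_(y in A) (h y - c) ^+ 2.
Proof.
move=> A_gt0; set S := \sum_(z in A) h z; set m := S / #|A|%:R.
have cardAm : #|A|%:R * m = S.
  by rewrite /m mulrCA mulfV ?mulr1 // pnatr_eq0 -lt0n.
(* (h - c)^2 - (h - m)^2 is affine in h; summing it gives #|A| (m - c)^2. *)
have sqr_diff y : (h y - c) ^+ 2 - (h y - m) ^+ 2
                  = (m - c) * (2 * h y) - (m - c) * (m + c) by ring.
rewrite -subr_ge0 -sumrB (eq_bigr _ (fun y _ => sqr_diff y)) sumrB.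
rewrite -mulr_sumr -mulr_sumr sumr_const -/S -[X in _ - X]mulr_natr.
have -> : (m - c) * (2 * S) - (m - c) * (m + c) * #|A|%:R
          = #|A|%:R * (m - c) ^+ 2 by rewrite -cardAm; ring.
exact: mulr_ge0 (ler0n _ _) (sqr_ge0 _).
Qed.

Section Influence.
Variables (R : realFieldType) (T : finType) (n : nat).
Implicit Types (P : 'I_n -> {set T}) (g : {ffun 'I_n -> T} -> R).

Lemma inprod_upd P x i y : inprod P x -> y \in P i -> inprod P (upd x i y).
Proof.
move=> /forallP xP yP; apply/forallP => l; rewrite ffunE.
by case: eqP => [->|_] //; exact: xP.
Qed.

Lemma card_prodset P : #|prodset P| = (\prod_(i < n) #|P i|)%N.
Proof.
have := card_family (fun i : 'I_n => mem (P i)).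
rewrite foldrE big_map big_enum /= => <-.
by apply: eq_card => x; rewrite !inE; apply/forallP/familyP.
Qed.

Lemma Var_i_ge0 P g i x : 0 <= Var_i P g i x.
Proof. by rewrite divr_ge0 // sumr_ge0 // => y _; exact: sqr_ge0. Qed.

Lemma Inf_ge0 P g i : 0 <= Inf P g i.
Proof. by rewrite divr_ge0 // sumr_ge0 // => x _; exact: Var_i_ge0. Qed.

Lemma Var_i_le_sqr_div4 P g i x (M : R) :
  (0 < #|P i|)%N -> (forall y, y \in P i -> 0 <= g (upd x i y) <= M) ->
  Var_i P g i x <= M ^+ 2 / 4%:R.
Proof.
move=> Pi_gt0 gM; rewrite /Var_i /mean_i ler_pdivrMr ?ltr0n //.
apply: le_trans (sum_sqr_dev_mean_le (fun y => g (upd x i y)) (M / 2%:R) Pi_gt0) _.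
apply: le_trans (_ : \sum_(y in P i) M ^+ 2 / 4%:R <= _).
  by apply: ler_sum => y /gM /andP[g_ge0 g_leM]; nra.
by rewrite sumr_const mulr_natr.
Qed.

Lemma Inf_le_sqr_div4 P g i (M : R) :
  (0 < #|prodset P|)%N -> (0 < #|P i|)%N ->
  (forall x, inprod P x -> 0 <= g x <= M) ->
  Inf P g i <= M ^+ 2 / 4%:R.
Proof.
move=> Pi_gt0 Pi_i_gt0 gM; rewrite /Inf /Eprod ler_pdivrMr ?ltr0n //.
apply: le_trans (_ : \sum_(x in prodset P) M ^+ 2 / 4%:R <= _).
  apply: ler_sum => x; rewrite inE => xP.
  by apply: Var_i_le_sqr_div4 => // y yP; apply/gM/inprod_upd.
by rewrite sumr_const mulr_natr.
Qed.

End Influence.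

Section RemoveAt.
Variables (R : realFieldType) (T : finType) (n : nat).
Variables (P : 'I_n -> {set T}) (j : 'I_n) (a : T).
Hypothesis aPj : a \in P j.

Local Notation P' := (remove_at P j a).

Lemma remove_at_neq i : i != j -> P' i = P i.
Proof. by rewrite /remove_at => /negbTE ->. Qed.

Lemma prodset_remove_at : prodset P' = [set x in prodset P | x j != a].
Proof.
apply/setP => x; rewrite !inE /inprod /remove_at; apply/forallP/andP.
  move=> xP'; split.
    apply/forallP => i; have := xP' i.
    by case: eqP => [->|_] //; rewrite in_setD1 => /andP[].
  by have := xP' j; rewrite eqxx in_setD1 => /andP[].
move=> [/forallP xP xj_neq_a] i.
by case: eqP => [->|_]; rewrite ?in_setD1 ?xj_neq_a xP.
Qed.

Lemma card_prodset_remove_at :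
  #|prodset P| = (#|P j| * \prod_(i < n | i != j) #|P i|)%N /\
  #|prodset P'| = (#|P j|.-1 * \prod_(i < n | i != j) #|P i|)%N.
Proof.
rewrite !card_prodset; split; rewrite (bigD1 j) //=; congr (_ * _)%N.
  by rewrite /remove_at eqxx (cardsD1 a (P j)) aPj.
by apply: eq_bigr => i /remove_at_neq ->.
Qed.

Lemma sum_prodset_remove_at (g : {ffun 'I_n -> T} -> R) :
  (forall x, inprod P x -> x j = a -> g x = 0) ->
  \sum_(x in prodset P) g x = \sum_(x in prodset P') g x.
Proof.
move=> g_slice0; rewrite prodset_remove_at.
rewrite (bigID (fun x : {ffun 'I_n -> T} => x j == a)) /=.
rewrite big1 ?add0r => [|x /andP[]]; last by rewrite inE => xP /eqP /g_slice0 ->.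
by apply: eq_bigl => x; rewrite !inE.
Qed.

Lemma Var_i_canalized (f : {ffun 'I_n -> T} -> R) (b : R) i x :
  weakly_canalizing P f j a b -> i != j -> inprod P x -> x j = a ->
  Var_i P f i x = 0.
Proof.
move=> wc ij xP xja.
have fb y : y \in P i -> f (upd x i y) = b.
  by move=> yP; apply: wc; [exact: inprod_upd | rewrite ffunE eq_sym (negbTE ij)].
rewrite /Var_i big1 ?mul0r // => y yP.
rewrite /mean_i (eq_bigr _ (fun y _ => fb y _)) // fb // sumr_const.
have Pi_gt0 : (0 < #|P i|)%N by apply/card_gt0P; exists y.
by rewrite -[b *+ _]mulr_natr mulfK ?pnatr_eq0 -?lt0n // subrr expr2 mul0r.
Qed.

Lemma Inf_remove_at (f : {ffun 'I_n -> T} -> R) (b : R) i :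
  (forall i, 0 < #|P i|)%N -> (2 <= #|P j|)%N ->
  weakly_canalizing P f j a b -> i != j ->
  Inf P f i = (#|P j|%:R - 1) / #|P j|%:R * Inf P' f i.
Proof.
move=> P_gt0 Pj_ge2 wc ij.
have [cardP cardP'] := card_prodset_remove_at.
have sum_eq : \sum_(x in prodset P) Var_i P f i x
              = \sum_(x in prodset P') Var_i P' f i x.
  rewrite (sum_prodset_remove_at (fun x => Var_i_canalized wc ij)).
  by apply: eq_bigr => x _; rewrite /Var_i /mean_i remove_at_neq.
rewrite /Inf /Eprod sum_eq cardP cardP' !natrM -subn1 natrB; last exact: ltnW.
have Q_gt0 : (0 < \prod_(i < n | i != j) #|P i|)%N by exact: prodn_gt0.
have k_gt0 : (0 < #|P j|)%N by exact: P_gt0.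
have k1_neq0 : (#|P j|%:R - 1 : R) != 0 by rewrite subr_eq0 gt_eqF // ltr1n.
field; rewrite k1_neq0 !pnatr_eq0 -!lt0n Q_gt0 k_gt0 //.
Qed.

End RemoveAt.

Theorem mainTheorem4 (R : realFieldType) (T : finType) (n : nat)
  (P : 'I_n -> {set T}) (f : {ffun 'I_n -> T} -> R) (M : R)
  (j : 'I_n) (a : T) (b : R) :
  (forall i, 0 < #|P i|)%N ->
  (2 <= #|P j|)%N ->
  a \in P j ->
  (forall x, inprod P x -> 0 <= f x <= M) ->
  weakly_canalizing P f j a b ->
  AS P f <= M ^+ 2 / 4%:R
            + ((#|P j|%:R - 1) / #|P j|%:R) * AS (remove_at P j a) f.
Proof.
move=> P_gt0 Pj_ge2 aPj fM wc.
set c := (#|P j|%:R - 1) / #|P j|%:R.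
have c_ge0 : 0 <= c by rewrite divr_ge0 // subr_ge0 ler1n ltnW.
have Inf_j : Inf P f j <= M ^+ 2 / 4%:R.
  by apply: Inf_le_sqr_div4 => //; rewrite card_prodset prodn_gt0.
have Inf'_j : 0 <= Inf (remove_at P j a) f j by exact: Inf_ge0.
rewrite /AS (bigD1 j) //= [X in _ <= _ + _ * X](bigD1 j) //= mulrDr mulr_sumr.
rewrite (eq_bigr _ (fun i ij => Inf_remove_at aPj P_gt0 Pj_ge2 wc ij)).
by have := mulr_ge0 c_ge0 Inf'_j; lra.
Qed.
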